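(* Let $G=S_n$ and $H=S_b\wr S_a$ (the stabiliser of a partition of $\{1,\dots,n\}$ into $a$ blocks of size $b$), where $n=ab$, $a=b+2$ and $b\geqslant 2$. Then $b(G,H)=3$.
   Context: For a subgroup $H\leqslant G$, $H_G=\bigcap_{g\in G}H^g$ is the core of $H$, and $b(G,H)=\min\{|S| : S\subseteq G,\ \bigcap_{g\in S}H^g=H_G\}$. Equivalently here, $b(G,H)$ is the minimal number of partitions of $\{1,\dots,n\}$ into $a$ parts of size $b$ whose common stabiliser in $S_n$ is trivial. *)

From mathcomp Require Import all_boot all_order all_fingroup.
Set Implicit Arguments. Unset Strict Implicit. Unset Printing Implicit Defensive.
Local Open Scope group_scope.

Definition core (gT : finGroupType) (G H : {set gT}) : {set gT} :=
  \bigcap_(g in G) H :^ g.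

(* The minimum is taken over a finite nonempty family (S = G always works),
   with default value #|G| (never reached strictly above the true minimum). *)
Definition base_size (gT : finGroupType) (G H : {set gT}) : nat :=
  \big[minn/#|G|]_(S : {set gT} | (S \subset G) &&
                     ((\bigcap_(g in S) H :^ g) == core G H)) #|S|.

(* The stabiliser in Sym({0,..,n-1}) of the partition of {0,..,n-1} into the
   consecutive blocks {k*b, ..., k*b + b-1}; when n = a*b this is a partition
   into a blocks of size b, and its stabiliser is S_b wr S_a. *)
Definition block_stab (n b : nat) : {set {perm 'I_n}} :=
  [set s : {perm 'I_n} | [forall i : 'I_n, forall j : 'I_n,
      ((s i %/ b) == (s j %/ b)) == ((i %/ b) == (j %/ b))]].

From mathcomp Require Import all_boot all_order all_fingroup.
From mathcomp Require Import zify.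
Set Implicit Arguments. Unset Strict Implicit. Unset Printing Implicit Defensive.

(* Conjugates of H are the stabilisers of partitions into
   a blocks of size b, so b(S_n, H) = 3 says: some three such partitions have
   trivial common stabiliser, and no two do.

   Index the points by the pair of blocks (one per partition)
   containing them; this gives cells of an a x a grid.  If a cell holds two
   points, their transposition stabilises both partitions.  Otherwise every
   row and every column of the grid has exactly two empty cells; these form a
   2-regular bipartite graph, and advancing every vertex two steps along a
   fixed orientation of each of its cycles permutes rows and columns so as to
   preserve the occupied cells.  This lifts to a nontrivial permutation of the
   points stabilising both partitions.

   For an explicit triple P, Q, R: the empty cells of P x Q form
   a single cycle through all blocks, so the common stabiliser of P and Q is
   dihedral (rotations and a reflection of the grid), and the partition R,
   obtained from P by moving three points cyclically, is stabilised by none of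
   these permutations but the identity. *)

(* A partition of a finite set T is described by a labelling L : T -> U, its
   blocks being the fibres of L.  The permutation x stabilises the partition
   when it maps fibres onto fibres. *)
Definition preserves (T : finType) (U : eqType) (x : {perm T}) (L : T -> U) :=
  forall i j, (L (x i) == L (x j)) = (L i == L j).

Section Preserves.
Variables (T : finType) (U : eqType) (L : T -> U).
Local Open Scope group_scope.

Lemma preserves1 : preserves 1 L.
Proof. by move=> i j; rewrite !perm1. Qed.

Lemma preservesV x : preserves x L -> preserves x^-1 L.
Proof. by move=> xL i j; rewrite -xL !permKV. Qed.

Lemma preservesM x y : preserves x L -> preserves y L -> preserves (x * y) L.
Proof. by move=> xL yL i j; rewrite !permM yL xL. Qed.

Lemma preserves_eq (L' : T -> U) x : L =1 L' -> preserves x L -> preserves x L'.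
Proof. by move=> eL xL i j; rewrite -!eL xL. Qed.

Lemma mem_block_stab_conj n b (x g : {perm 'I_n}) :
  x \in block_stab n b :^ g <-> preserves x (fun i => g^-1 i %/ b).
Proof.
rewrite mem_conjg inE; split.
  move=> /forallP xH i j; move/forallP/(_ (g^-1 j))/eqP: (xH (g^-1 i)).
  by rewrite /conjg invgK !permM !permKV.
move=> xL; apply/'forall_forallP => i j; apply/eqP.
by rewrite /conjg invgK !permM xL !permK.
Qed.

End Preserves.

Definition other (T : finType) (A : {set T}) (c : T) := odflt c [pick c' in A :\ c].

Lemma otherP (T : finType) (A : {set T}) c : #|A| = 2 -> c \in A ->
  [/\ other A c \in A, other A c != c, other A (other A c) = c &
      forall c', c' \in A -> c' = c \/ c' = other A c].
Proof.
move=> /eqP /cards2P [x [y [nxy ->]]].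
have other_pair (u v : T) : u != v -> other [set u; v] u = v.
  move=> nuv; rewrite /other; case: pickP => [w|/(_ v)].
    rewrite !inE => /andP [nwu /orP [/eqP wu | /eqP //]].
    by rewrite wu eqxx in nwu.
  by rewrite !inE eq_sym nuv eqxx orbT.
have oxy := other_pair x y nxy.
have nyx : y != x by rewrite eq_sym.
have oyx : other [set x; y] y = x by rewrite setUC other_pair.
rewrite !inE => /orP [] /eqP ->; rewrite ?oxy ?oyx; split;
  rewrite ?inE ?eqxx ?orbT //;
  by move=> c'; rewrite !inE => /orP [] /eqP ->; auto.
Qed.

(* A set Z of cells of a grid R x C with exactly two cells in each row and in
   each column is the edge set of a 2-regular bipartite graph on the rows and
   columns, i.e. a disjoint union of even cycles.  Orienting the cycles and
   advancing every vertex two steps yields a fixed-point-free permutation of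
   the rows and a permutation of the columns that together preserve Z. *)
Section TwoRegular.
Variables (R C : finType) (Z : {set R * C}).
Local Open Scope group_scope.

Definition row_cells r := [set c | (r, c) \in Z].
Definition col_cells c := [set r | (r, c) \in Z].

Hypothesis row_two : forall r, #|row_cells r| = 2.
Hypothesis col_two : forall c, #|col_cells c| = 2.

Definition row_mate_fun (z : R * C) :=
  if z \in Z then (z.1, other (row_cells z.1) z.2) else z.
Definition col_mate_fun (z : R * C) :=
  if z \in Z then (other (col_cells z.2) z.1, z.2) else z.

Lemma row_mate_funP z : z \in Z ->
  [/\ row_mate_fun z \in Z, (row_mate_fun z).1 = z.1, row_mate_fun z != z,
      row_mate_fun (row_mate_fun z) = z &
      forall w, w \in Z -> w.1 = z.1 -> w = z \/ w = row_mate_fun z].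
Proof.
case: z => r c zZ; have cr : c \in row_cells r by rewrite inE.
have [oZ onc ooc o2] := otherP (row_two r) cr.
rewrite /row_mate_fun zZ /=; rewrite inE in oZ; rewrite oZ /= ooc.
split=> //; first by apply: contra onc => /eqP [->].
case=> r' c' wZ /= er; subst r'; have [] := o2 c'; rewrite ?inE // => ->; auto.
Qed.

Lemma col_mate_funP z : z \in Z ->
  [/\ col_mate_fun z \in Z, (col_mate_fun z).2 = z.2, col_mate_fun z != z,
      col_mate_fun (col_mate_fun z) = z &
      forall w, w \in Z -> w.2 = z.2 -> w = z \/ w = col_mate_fun z].
Proof.
case: z => r c zZ; have rc : r \in col_cells c by rewrite inE.
have [oZ onr oor o2] := otherP (col_two c) rc.
rewrite /col_mate_fun zZ /=; rewrite inE in oZ; rewrite oZ /= oor.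
split=> //; first by apply: contra onr => /eqP [->].
case=> r' c' wZ /= ec; subst c'; have [] := o2 r'; rewrite ?inE // => ->; auto.
Qed.

Lemma row_mate_funK : involutive row_mate_fun.
Proof.
move=> z; have [/row_mate_funP [] //|zNZ] := boolP (z \in Z).
by rewrite /row_mate_fun (negbTE zNZ) (negbTE zNZ).
Qed.

Lemma col_mate_funK : involutive col_mate_fun.
Proof.
move=> z; have [/col_mate_funP [] //|zNZ] := boolP (z \in Z).
by rewrite /col_mate_fun (negbTE zNZ) (negbTE zNZ).
Qed.

Definition row_mate := perm (can_inj row_mate_funK).
Definition col_mate := perm (can_inj col_mate_funK).

Lemma row_mateK : involutive row_mate.
Proof. by move=> z; rewrite !permE row_mate_funK. Qed.
Lemma col_mateK : involutive col_mate.
Proof. by move=> z; rewrite !permE col_mate_funK. Qed.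

Lemma row_mateZ z : (row_mate z \in Z) = (z \in Z).
Proof.
rewrite permE; have [/row_mate_funP [] //|zNZ] := boolP (z \in Z).
by rewrite /row_mate_fun (negbTE zNZ) (negbTE zNZ).
Qed.
Lemma col_mateZ z : (col_mate z \in Z) = (z \in Z).
Proof.
rewrite permE; have [/col_mate_funP [] //|zNZ] := boolP (z \in Z).
by rewrite /col_mate_fun (negbTE zNZ) (negbTE zNZ).
Qed.

Lemma row_mate_row z : z \in Z -> (row_mate z).1 = z.1.
Proof. by rewrite permE => /row_mate_funP []. Qed.
Lemma col_mate_col z : z \in Z -> (col_mate z).2 = z.2.
Proof. by rewrite permE => /col_mate_funP []. Qed.

Lemma row_mate_neq z : z \in Z -> row_mate z != z.
Proof. by rewrite permE => /row_mate_funP []. Qed.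
Lemma col_mate_neq z : z \in Z -> col_mate z != z.
Proof. by rewrite permE => /col_mate_funP []. Qed.

Lemma same_row z w : z \in Z -> w \in Z -> w.1 = z.1 -> w = z \/ w = row_mate z.
Proof. by rewrite permE => /row_mate_funP [_ _ _ _]; apply. Qed.
Lemma same_col z w : z \in Z -> w \in Z -> w.2 = z.2 -> w = z \/ w = col_mate z.
Proof. by rewrite permE => /col_mate_funP [_ _ _ _]; apply. Qed.

Lemma col_mate_row z : z \in Z -> (col_mate z).1 != z.1.
Proof.
move=> zZ; apply: contra (col_mate_neq zZ) => /eqP e1.
by apply/eqP/injective_projections => //; apply: col_mate_col.
Qed.

Definition walk := row_mate * col_mate.

Lemma walkE z : walk z = col_mate (row_mate z).
Proof. exact: permM. Qed.

Lemma walkZ z : (walk z \in Z) = (z \in Z).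
Proof. by rewrite walkE col_mateZ row_mateZ. Qed.

Lemma walk_row_mate z : walk (row_mate z) = col_mate z.
Proof. by rewrite walkE row_mateK. Qed.

(* Conjugating walk by row_mate inverts it. *)
Lemma iter_walk_row_mate m z : iter m walk (row_mate (iter m walk z)) = row_mate z.
Proof.
elim: m z => [//|m IH] z.
rewrite iterSr iterS walkE [walk (iter m walk z)]walkE.
by rewrite row_mateK col_mateK IH.
Qed.

(* The walk never leads from a cell of Z to its row mate: after 2m steps some
   cell would be its own row mate, after 2m+1 steps its own column mate. *)
Lemma row_mate_notin_orbit z : z \in Z -> row_mate z \notin porbit walk z.
Proof.
have iter_walk_inj m u v : iter m walk u = iter m walk v -> u = v.
  by rewrite -!permX; apply: perm_inj.
have iter_walkZ m : iter m walk z \in Z = (z \in Z).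
  by elim: m => [//|m IH]; rewrite iterS walkZ.
move=> zZ; apply/porbitP => -[j]; rewrite permX.
rewrite -(odd_double_half j) -addnn; set m := j./2.
case: (odd j); last first.
  rewrite add0n iterD -(iter_walk_row_mate m z) => /iter_walk_inj /eqP.
  by apply/negP/row_mate_neq; rewrite iter_walkZ.
rewrite add1n -addSn iterD -(iter_walk_row_mate m.+1 z).
move=> /iter_walk_inj; rewrite iterS walkE => /(congr1 row_mate).
rewrite row_mateK => /eqP.
by apply/negP/col_mate_neq; rewrite row_mateZ iter_walkZ.
Qed.

(* The two walk-orbits through a cell of Z and through its row mate are the
   two orientations of one cycle of Z.  Comparing their ranks selects one
   orientation of every cycle; the forward cells are those whose own orbit is
   the selected one. *)
Definition orbit_rank z := enum_rank (porbit walk z).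
Definition forward := [set z in Z | orbit_rank z < orbit_rank (row_mate z)].

Lemma forwardZ z : z \in forward -> z \in Z.
Proof. by rewrite inE => /andP []. Qed.

Lemma forward_walk z : (walk z \in forward) = (z \in forward).
Proof.
have orbit_walk y : porbit walk (walk y) = porbit walk y.
  by apply/eqP; rewrite eq_porbit_mem -{1}(expg1 walk) mem_porbit.
have row_mate_walk : row_mate (walk z) = (walk^-1) (row_mate z).
  by rewrite -[in RHS](iter_walk_row_mate 1 z) permK.
rewrite !inE walkZ /orbit_rank orbit_walk row_mate_walk.
by rewrite -{2}(permKV walk (row_mate z)) orbit_walk.
Qed.

Lemma forward_row_mate z : z \in Z -> (row_mate z \in forward) = (z \notin forward).
Proof.
move=> zZ; rewrite !inE row_mateZ row_mateK zZ /=.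
have : orbit_rank z != orbit_rank (row_mate z).
  by rewrite (inj_eq enum_rank_inj) eq_sym eq_porbit_mem row_mate_notin_orbit.
by rewrite -val_eqE /= ltnNge leq_eqVlt negb_or => /negbTE ->.
Qed.

Lemma forward_col_mate z : z \in Z -> (col_mate z \in forward) = (z \notin forward).
Proof. by move=> zZ; rewrite -walk_row_mate forward_walk forward_row_mate. Qed.

Lemma forward_row_uniq z w : z \in forward -> w \in forward -> w.1 = z.1 -> w = z.
Proof.
move=> zf wf /(same_row (forwardZ zf) (forwardZ wf)) [//|wz].
by move: wf; rewrite wz forward_row_mate ?zf ?(forwardZ zf).
Qed.

Lemma forward_col_uniq z w : z \in forward -> w \in forward -> w.2 = z.2 -> w = z.
Proof.
move=> zf wf /(same_col (forwardZ zf) (forwardZ wf)) [//|wz].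
by move: wf; rewrite wz forward_col_mate ?zf ?(forwardZ zf).
Qed.

Lemma forward_in_row r : exists2 z, z \in forward & z.1 = r.
Proof.
have /set0Pn [c] : row_cells r != set0 by rewrite -card_gt0 row_two.
rewrite inE => rcZ; have [rcf|rcNf] := boolP ((r, c) \in forward).
  by exists (r, c).
by exists (row_mate (r, c)); rewrite ?forward_row_mate ?row_mate_row.
Qed.

Lemma forward_in_col c : exists2 z, z \in forward & z.2 = c.
Proof.
have /set0Pn [r] : col_cells c != set0 by rewrite -card_gt0 col_two.
rewrite inE => rcZ; have [rcf|rcNf] := boolP ((r, c) \in forward).
  by exists (r, c).
by exists (col_mate (r, c)); rewrite ?forward_col_mate ?col_mate_col.
Qed.

(* Moving every forward cell one step along the walk moves rows to rows and
   columns to columns: this is the automorphism of Z we are after. *)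
Definition row_shift r :=
  if [pick z in forward | z.1 == r] is Some z then (walk z).1 else r.
Definition col_shift c :=
  if [pick z in forward | z.2 == c] is Some z then (walk z).2 else c.

Lemma row_shiftE z : z \in forward -> row_shift z.1 = (walk z).1.
Proof.
move=> zf; rewrite /row_shift; case: pickP => [w /andP [wf /eqP wz]|/(_ z)].
  by rewrite (forward_row_uniq zf wf wz).
by rewrite zf eqxx.
Qed.

Lemma col_shiftE z : z \in forward -> col_shift z.2 = (walk z).2.
Proof.
move=> zf; rewrite /col_shift; case: pickP => [w /andP [wf /eqP wz]|/(_ z)].
  by rewrite (forward_col_uniq zf wf wz).
by rewrite zf eqxx.
Qed.

Lemma row_shift_inj : injective row_shift.
Proof.
move=> r r'; have [z zf <-] := forward_in_row r; have [z' z'f <-] := forward_in_row r'.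
rewrite !row_shiftE // => e; congr fst; apply: (@perm_inj _ walk).
by apply: forward_row_uniq e; rewrite forward_walk.
Qed.

Lemma col_shift_inj : injective col_shift.
Proof.
move=> c c'; have [z zf <-] := forward_in_col c; have [z' z'f <-] := forward_in_col c'.
rewrite !col_shiftE // => e; congr snd; apply: (@perm_inj _ walk).
by apply: forward_col_uniq e; rewrite forward_walk.
Qed.

Lemma row_shift_moves r : row_shift r != r.
Proof.
have [z zf <-] := forward_in_row r; have zZ := forwardZ zf.
by rewrite row_shiftE // walkE -(row_mate_row zZ) col_mate_row ?row_mateZ.
Qed.

(* A forward cell goes to its successor on the walk, a backward cell z to the
   cell row_mate (col_mate z); either way cells of Z go to cells of Z. *)
Lemma shift_cellZ z : z \in Z -> (row_shift z.1, col_shift z.2) \in Z.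
Proof.
move=> zZ; have [zf|zNf] := boolP (z \in forward).
  by rewrite row_shiftE // col_shiftE // -surjective_pairing walkZ.
have rf : row_mate z \in forward by rewrite forward_row_mate.
have cf : col_mate z \in forward by rewrite forward_col_mate.
rewrite -(row_mate_row zZ) -(col_mate_col zZ) row_shiftE // col_shiftE //.
have cZ := forwardZ cf.
rewrite walk_row_mate walkE col_mate_col ?row_mateZ //.
by rewrite -(row_mate_row cZ) -surjective_pairing row_mateZ.
Qed.

Theorem two_regular_automorphism :
  exists sigma : R -> R, exists tau : C -> C,
  [/\ injective sigma, injective tau, forall r, sigma r != r &
      forall z, ((sigma z.1, tau z.2) \in Z) = (z \in Z)].
Proof.
exists row_shift, col_shift; split; [exact: row_shift_inj|exact: col_shift_inj|
  exact: row_shift_moves|].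
pose shift z := (row_shift z.1, col_shift z.2).
have shift_inj : injective shift.
  by move=> [r c] [r' c'] [/row_shift_inj -> /col_shift_inj ->].
have shiftZ : shift @: Z = Z.
  apply/eqP; rewrite eqEcard card_imset // leqnn andbT.
  by apply/subsetP => _ /imsetP [z zZ ->]; apply: shift_cellZ.
by move=> z; rewrite -{1}shiftZ (mem_imset _ _ shift_inj).
Qed.
End TwoRegular.

Section LowerBound.
Local Open Scope group_scope.

Lemma lift_cell_map (T R C : finType) (L : T -> R) (M : T -> C)
    (f : R * C -> R * C) :
  injective (fun i => (L i, M i)) -> injective f ->
  (forall i, exists j, f (L i, M i) = (L j, M j)) ->
  exists x : {perm T}, forall i, (L (x i), M (x i)) = f (L i, M i).
Proof.
move=> cell_inj f_inj f_occ.
pose xf i := odflt i [pick j | (L j, M j) == f (L i, M i)].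
have xfE i : (L (xf i), M (xf i)) = f (L i, M i).
  have [j ej] := f_occ i; rewrite /xf; case: pickP => [k /eqP //|/(_ j)].
  by rewrite ej eqxx.
have xf_inj : injective xf.
  by move=> i j /(congr1 (fun k => (L k, M k))); rewrite !xfE => /f_inj /cell_inj.
by exists (perm xf_inj) => i; rewrite permE.
Qed.

Lemma tperm_preserves (T : finType) (U : eqType) (L : T -> U) i j :
  L i = L j -> preserves (tperm i j) L.
Proof.
move=> eL; have tL k : L (tperm i j k) = L k by case: tpermP => [->|->|].
by move=> k l; rewrite !tL.
Qed.

Section CommonStabiliser.
Variables (T : finType) (m : nat) (L M : T -> 'I_m.+2).
Hypothesis m_gt0 : 0 < m.
Hypothesis L_fibre : forall r, #|[set i | L i == r]| = m.
Hypothesis M_fibre : forall c, #|[set i | M i == c]| = m.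

Definition empty_cells := ~: [set (L i, M i) | i in T].

Lemma missing_labels (A : {set T}) (F : T -> 'I_m.+2) :
  {in A &, injective F} -> #|A| = m -> #|~: (F @: A)| = 2.
Proof.
move=> F_inj cA; have := cardsC (F @: A).
by rewrite card_in_imset // cA card_ord; lia.
Qed.

Section NoCollision.
Hypothesis cell_inj : injective (fun i => (L i, M i)).

Lemma empty_row_two r : #|row_cells empty_cells r| = 2.
Proof.
have -> : row_cells empty_cells r = ~: (M @: [set i | L i == r]).
  apply/setP => c; rewrite !inE; congr negb; apply/imsetP/imsetP.
    by case=> i _ [-> ->]; exists i; rewrite ?inE.
  by case=> i; rewrite inE => /eqP <- ->; exists i.
apply: missing_labels (L_fibre r) => i j; rewrite !inE => /eqP ei /eqP ej eM.
by apply: cell_inj; rewrite ei ej eM.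
Qed.

Lemma empty_col_two c : #|col_cells empty_cells c| = 2.
Proof.
have -> : col_cells empty_cells c = ~: (L @: [set i | M i == c]).
  apply/setP => r; rewrite !inE; congr negb; apply/imsetP/imsetP.
    by case=> i _ [-> ->]; exists i; rewrite ?inE.
  by case=> i; rewrite inE => /eqP <- ->; exists i.
apply: missing_labels (M_fibre c) => i j; rewrite !inE => /eqP ei /eqP ej eL.
by apply: cell_inj; rewrite ei ej eL.
Qed.

(* The automorphism of the empty cells permutes the occupied cells, and lifts
   to a permutation of T moving every point of the block L = 0. *)
Lemma common_stabiliser_no_collision :
  exists2 x : {perm T}, x != 1 & preserves x L /\ preserves x M.
Proof.
have [sigma [tau [sigma_inj tau_inj sigma_moves sigmaZ]]] :=
  two_regular_automorphism empty_row_two empty_col_two.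
pose shift z := (sigma z.1, tau z.2).
have shift_inj : injective shift.
  by move=> [r c] [r' c'] [/sigma_inj -> /tau_inj ->].
have shift_occ i : exists j, shift (L i, M i) = (L j, M j).
  have : shift (L i, M i) \notin empty_cells.
    by rewrite sigmaZ inE negbK; apply: imset_f.
  by rewrite inE negbK => /imsetP [j _ ->]; exists j.
have [x xE] := lift_cell_map cell_inj shift_inj shift_occ.
have xL i : L (x i) = sigma (L i) by have [] := xE i.
have xM i : M (x i) = tau (M i) by have [] := xE i.
exists x; last by split=> i j; rewrite ?xL ?xM ?(inj_eq sigma_inj) ?(inj_eq tau_inj).
have /set0Pn [i _] : [set i | L i == ord0] != set0 by rewrite -card_gt0 L_fibre.
by apply: contraNneq (sigma_moves (L i)) => x1; rewrite -xL x1 perm1.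
Qed.
End NoCollision.

(* Two such partitions have a common nontrivial stabilising permutation:
   either two points share a cell and may be swapped, or no cell holds two
   points. *)
Lemma partitions_common_stabiliser :
  exists2 x : {perm T}, x != 1 & preserves x L /\ preserves x M.
Proof.
have [/existsP [i /existsP [j /and3P [nij /eqP eL /eqP eM]]]|no_coll] :=
  boolP [exists i, exists j, [&& i != j, L i == L j & M i == M j]].
  exists (tperm i j); last by split; apply: tperm_preserves.
  by apply: contra nij => /eqP /permP /(_ i); rewrite tpermL perm1 => ->.
apply: common_stabiliser_no_collision => i j [eL eM]; apply/eqP/negPn/negP => nij.
by apply: (negP no_coll); apply/existsP; exists i; apply/existsP; exists j;
  rewrite nij eL eM !eqxx.
Qed.
End CommonStabiliser.

Lemma card_block a b r : 0 < b -> r < a -> #|[set i : 'I_(a * b) | i %/ b == r]| = b.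
Proof.
move=> b_gt0 r_lt; have pt_lt (d : 'I_b) : r * b + d < a * b by have := ltn_ord d; nia.
pose pt d := Ordinal (pt_lt d).
have -> : [set i : 'I_(a * b) | i %/ b == r] = pt @: setT.
  apply/setP => i; rewrite inE; apply/eqP/imsetP => [e|[d _ ->]].
    exists (Ordinal (ltn_pmod i b_gt0)) => //; apply: val_inj => /=.
    by rewrite -e -divn_eq.
  by rewrite /= divnMDl // divn_small // addn0.
rewrite card_imset ?cardsT ?card_ord // => d d' /(congr1 val) /= /addnI.
exact: val_inj.
Qed.

Lemma block_stab_conjugates_meet b (g h : {perm 'I_(b.+2 * b)}) : 0 < b ->
  exists2 x, x != 1 & x \in (block_stab _ b :^ g) :&: (block_stab _ b :^ h).
Proof.
move=> b_gt0; pose label (k : {perm 'I_(b.+2 * b)}) i : 'I_b.+2 := inord (k^-1 i %/ b).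
have labelE k i : label k i = k^-1 i %/ b :> nat.
  by rewrite inordK // ltnS -ltnS ltn_divLR.
have label_fibre k r : #|[set i | label k i == r]| = b.
  have -> : [set i | label k i == r] = k @: [set i : 'I_(b.+2 * b) | i %/ b == r].
    apply/setP => i; rewrite inE -val_eqE /= labelE; apply/eqP/imsetP.
      by move=> e; exists (k^-1 i); rewrite ?inE ?e ?permKV.
    by case=> j; rewrite inE => /eqP <- ->; rewrite permK.
  by rewrite card_imset ?card_block //; apply: perm_inj.
have preserves_label x k : preserves x (label k) -> x \in block_stab _ b :^ k.
  by move=> xk; apply/mem_block_stab_conj => i j; have := xk i j; rewrite -!val_eqE /= !labelE.
have [x x_nt [xg xh]] := partitions_common_stabiliser b_gt0 (label_fibre g) (label_fibre h).
by exists x; rewrite // inE !preserves_label.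
Qed.
End LowerBound.

(* Case analysis on the innermost conditionals of the goal, so that the
   remaining arithmetic is linear. *)
Ltac split_ifs := repeat match goal with
  | |- context [if ?c then _ else _] =>
      lazymatch c with
      | context [if _ then _ else _] => fail
      | _ => case: (boolP c) => ? /=
      end
  end.

Section UpperBound.
Variable b : nat.
Hypothesis b_gt1 : 1 < b.
Local Notation n := (b.+2 * b).

Lemma b_gt0 : 0 < b. Proof. lia. Qed.

(* Reduction modulo b + 2 of a number below 2 (b + 2); written as a case split
   it keeps all the arithmetic below linear. *)
Definition wrap m := if m < b.+2 then m else m - b.+2.

(* The point i of 'I_n has coordinates (row, offset) = (i %/ b, i %% b) in a
   grid of b + 2 rows and b columns; the rows are the blocks of the partition
   P stabilised by block_stab n b. *)
Definition prow (i : 'I_n) := i %/ b.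
Definition poff (i : 'I_n) := i %% b.
Definition coords i := (prow i, poff i).
Definition in_grid (p : nat * nat) := (p.1 < b.+2) && (p.2 < b).

Lemma prow_lt i : prow i < b.+2.
Proof. by rewrite /prow ltn_divLR ?b_gt0. Qed.
Lemma poff_lt i : poff i < b.
Proof. by rewrite /poff ltn_pmod ?b_gt0. Qed.
Lemma coords_in_grid i : in_grid (coords i).
Proof. by rewrite /in_grid prow_lt poff_lt. Qed.

Lemma coords_inj : injective coords.
Proof.
move=> i j [ri oi]; apply: val_inj.
by rewrite /= (divn_eq i b) (divn_eq j b) -/(prow i) -/(poff i) ri oi.
Qed.

Lemma n_gt0 : 0 < n. Proof. by rewrite muln_gt0 b_gt0. Qed.

Definition point (p : nat * nat) : 'I_n := insubd (Ordinal n_gt0) (p.1 * b + p.2).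

Lemma pointK p : in_grid p -> coords (point p) = p.
Proof.
case: p => r d /andP [/= r_lt d_lt].
have rd_lt : r * b + d < n by nia.
by rewrite /coords /prow /poff val_insubd rd_lt divnMDl ?b_gt0 // divn_small
  // addn0 modnMDl modn_small.
Qed.

Definition grid_map (F : nat * nat -> nat * nat) (i : 'I_n) := point (F (coords i)).

Section GridMap.
Variable F : nat * nat -> nat * nat.
Hypothesis F_grid : forall p, in_grid p -> in_grid (F p).
Hypothesis F_inj : {in in_grid &, injective F}.

Lemma grid_mapE i : coords (grid_map F i) = F (coords i).
Proof. by rewrite pointK ?F_grid ?coords_in_grid. Qed.

Lemma grid_map_inj : injective (grid_map F).
Proof.
move=> i j /(congr1 coords); rewrite !grid_mapE => /F_inj.
by move=> /(_ (coords_in_grid i) (coords_in_grid j)) /coords_inj.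
Qed.
End GridMap.

Lemma prow_point r d : r < b.+2 -> d < b -> prow (point (r, d)) = r.
Proof. by move=> r_lt d_lt; rewrite -[prow _]/(coords _).1 pointK // /in_grid r_lt d_lt. Qed.
Lemma poff_point r d : r < b.+2 -> d < b -> poff (point (r, d)) = d.
Proof. by move=> r_lt d_lt; rewrite -[poff _]/(coords _).2 pointK // /in_grid r_lt d_lt. Qed.

(* Each P-block meets every Q-block in at most one point and
   misses exactly the two Q-blocks r and r - 1: these are the holes of row r.
   The holes form a single cycle through all rows and columns. *)
Definition qcol (i : 'I_n) := wrap (prow i + poff i + 1).
Definition hole r c := (c == r) || (c == wrap (r + b.+1)).

Lemma qcol_lt i : qcol i < b.+2.
Proof. by have := prow_lt i; have := poff_lt i; rewrite /qcol /wrap; split_ifs; lia. Qed.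

Lemma qcol_not_hole i : ~~ hole (prow i) (qcol i).
Proof.
by have := prow_lt i; have := poff_lt i; rewrite /hole /qcol /wrap; split_ifs; lia.
Qed.

Lemma cell_inj i j : prow i = prow j -> qcol i = qcol j -> i = j.
Proof.
rewrite /qcol => er; rewrite er => eq; apply: coords_inj; congr (_, _) => //.
by have := poff_lt i; have := poff_lt j; have := prow_lt j; move: eq;
  rewrite /wrap; split_ifs; lia.
Qed.

Lemma cell_point r c : r < b.+2 -> c < b.+2 -> ~~ hole r c ->
  exists i, prow i = r /\ qcol i = c.
Proof.
move=> r_lt c_lt no_hole; pose d := wrap (c + b.+1 - r).
have d_lt : d < b by move: no_hole; rewrite /hole /d /wrap; split_ifs; lia.
exists (point (r, d)); rewrite /qcol prow_point ?poff_point //; split=> //.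
by move: no_hole; rewrite /hole /d /wrap; split_ifs; lia.
Qed.

Lemma col_point c : c < b.+2 -> exists i, qcol i = c.
Proof.
move=> c_lt; have r_lt : wrap (c + 2) < b.+2 by rewrite /wrap; split_ifs; lia.
have [|i [_ ci]] := cell_point r_lt c_lt; last by exists i.
by rewrite /hole /wrap; split_ifs; lia.
Qed.

Definition succ c := wrap c.+1.

Lemma succ_lt c : c < b.+2 -> succ c < b.+2.
Proof. by rewrite /succ /wrap; split_ifs; lia. Qed.

Lemma succ_neq c : c < b.+2 -> (succ c == c) = false.
Proof. by rewrite /succ /wrap; split_ifs; lia. Qed.

Lemma hole_in_col s c : s < b.+2 -> c < b.+2 -> hole s c = (s == c) || (s == succ c).
Proof. by rewrite /hole /succ /wrap; split_ifs; lia. Qed.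

Lemma hole_in_row r c : r < b.+2 -> c < b.+2 -> hole (succ r) c = (c == succ r) || (c == r).
Proof. by rewrite /hole /succ /wrap; split_ifs; lia. Qed.

Lemma iter_succ k r : r < b.+2 -> iter k succ r = (r + k) %% b.+2.
Proof.
have wrap_mod m : m < (b.+2).*2 -> wrap m = m %% b.+2.
  rewrite /wrap; case: (ltnP m b.+2) => [m_lt _|m_ge m_lt]; first by rewrite modn_small.
  by rewrite -{2}(subnK m_ge) modnDr modn_small //; lia.
move=> r_lt; elim: k => [|k IH]; first by rewrite addn0 modn_small.
rewrite iterS IH /succ wrap_mod; last by have := ltn_pmod (r + k) (ltn0Sn b.+1); lia.
by rewrite addnS -addn1 modnDml addn1.
Qed.

Lemma iter_succ_onto r c : r < b.+2 -> c < b.+2 -> iter (c + b.+2 - r) succ r = c.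
Proof.
move=> r_lt c_lt; rewrite iter_succ //.
have -> : r + (c + b.+2 - r) = c + b.+2 by lia.
by rewrite modnDr modn_small.
Qed.

Definition fixes_row (x : {perm 'I_n}) r := forall i, (prow (x i) == r) = (prow i == r).
Definition fixes_col (x : {perm 'I_n}) c := forall i, (qcol (x i) == c) = (qcol i == c).

(* A permutation stabilising both P and Q acts on the cycle of holes; fixing
   one row and an adjacent column, it fixes the whole cycle, hence every
   block of P and of Q, hence every point. *)
Section PQStabiliser.
Variable x : {perm 'I_n}.
Hypotheses (xP : preserves x prow) (xQ : preserves x qcol).

Lemma fixes_row_at j : prow (x j) = prow j -> fixes_row x (prow j).
Proof. by move=> e i; rewrite -{1}e xP. Qed.
Lemma fixes_col_at j : qcol (x j) = qcol j -> fixes_col x (qcol j).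
Proof. by move=> e i; rewrite -{1}e xQ. Qed.

(* If x fixes a row it permutes the holes of that row, and conversely for
   columns: a point in the image of a hole would lie in a hole. *)
Lemma hole_col r j : r < b.+2 -> fixes_row x r ->
  hole r (qcol j) -> hole r (qcol (x j)).
Proof.
move=> r_lt xr; apply: contraTT => no_hole.
have [k [kr kc]] := cell_point r_lt (qcol_lt _) no_hole.
have e1 : prow (x^-1%g k) = r by apply/eqP; rewrite -xr permKV kr.
have e2 : qcol (x^-1%g k) = qcol j by apply/eqP; rewrite -xQ permKV kc.
by have := qcol_not_hole (x^-1%g k); rewrite e1 e2.
Qed.

Lemma hole_row c j : c < b.+2 -> fixes_col x c ->
  hole (prow j) c -> hole (prow (x j)) c.
Proof.
move=> c_lt xc; apply: contraTT => no_hole.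
have [k [kr kc]] := cell_point (prow_lt _) c_lt no_hole.
have e1 : qcol (x^-1%g k) = c by apply/eqP; rewrite -xc permKV kc.
have e2 : prow (x^-1%g k) = prow j by apply/eqP; rewrite -xP permKV kr.
by have := qcol_not_hole (x^-1%g k); rewrite e1 e2.
Qed.

Lemma fixes_row_succ r : r < b.+2 -> fixes_row x r -> fixes_col x r ->
  fixes_row x (succ r).
Proof.
move=> r_lt xr xc; have s_lt := succ_lt r_lt.
have j_row : prow (point (succ r, 0)) = succ r by rewrite prow_point ?b_gt0.
have := @hole_row r (point (succ r, 0)) r_lt xc.
rewrite j_row hole_in_row // eqxx orbT hole_in_col ?prow_lt // => /(_ isT).
rewrite xr j_row succ_neq //= => /eqP e.
by rewrite -j_row; apply: fixes_row_at; rewrite e j_row.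
Qed.

Lemma fixes_col_succ r : r < b.+2 -> fixes_row x (succ r) -> fixes_col x r ->
  fixes_col x (succ r).
Proof.
move=> r_lt xr xc; have s_lt := succ_lt r_lt.
have [j j_col] := col_point s_lt.
have := @hole_col (succ r) j s_lt xr.
rewrite j_col hole_in_row // eqxx hole_in_row ?qcol_lt // => /(_ isT).
rewrite xc j_col succ_neq // orbF => /eqP e.
by rewrite -j_col; apply: fixes_col_at; rewrite e j_col.
Qed.

Lemma PQ_stabiliser_trivial r : r < b.+2 -> fixes_row x r -> fixes_col x r -> x = 1%g.
Proof.
move=> r_lt xr xc.
have fixes_iter k : fixes_row x (iter k succ r) /\ fixes_col x (iter k succ r).
  elim: k => [//|k [IHr IHc]]; have k_lt : iter k succ r < b.+2.
    by rewrite iter_succ // ltn_pmod.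
  by have xr' := fixes_row_succ k_lt IHr IHc; split=> //; apply: fixes_col_succ.
apply/permP => i; rewrite perm1; apply: cell_inj; apply/eqP.
  have [+ _] := fixes_iter (prow i + b.+2 - r).
  by rewrite iter_succ_onto ?prow_lt // => ->.
have [_ +] := fixes_iter (qcol i + b.+2 - r).
by rewrite iter_succ_onto ?qcol_lt // => ->.
Qed.
End PQStabiliser.

Lemma preserves_of (h : {perm 'I_n}) (L : 'I_n -> nat) (f : nat -> nat) :
  (forall i, L i < b.+2) -> (forall i, L (h i) = f (L i)) ->
  (forall u v, u < b.+2 -> v < b.+2 -> f u = f v -> u = v) -> preserves h L.
Proof. by move=> L_lt hL f_inj i j; rewrite !hL; apply/eqP/eqP => [/f_inj|->]; auto. Qed.

(* The grid maps used below: rotation of the rows by k, a reflection, the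
   shear sending a point to its Q-block, and the cycle of the three points
   (0,0) -> (1,0) -> (2,1) -> (0,0) defining the third partition R. *)
Definition rotF k (p : nat * nat) := (wrap (p.1 + k), p.2).
Definition reflF (p : nat * nat) := (wrap (b.+2 - p.1), b.-1 - p.2).
Definition shearF (p : nat * nat) := (wrap (p.1 + p.2 + 1), p.2).
Definition cycleF (p : nat * nat) :=
  match p with (0, 0) => (1, 0) | (1, 0) => (2, 1) | (2, 1) => (0, 0) | _ => p end.

Lemma rotF_grid k : k < b.+2 -> forall p, in_grid p -> in_grid (rotF k p).
Proof. by move=> k_lt [r d] /andP [/= r_lt d_lt]; rewrite /in_grid /= d_lt /wrap; split_ifs; lia. Qed.
Lemma rotF_inj k : k < b.+2 -> {in in_grid &, injective (rotF k)}.
Proof.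
move=> k_lt [r d] [r' d'] /andP [/= r_lt _] /andP [/= r'_lt _] [+ ->].
by rewrite /wrap; split_ifs => e; congr (_, _); lia.
Qed.

Lemma reflF_grid p : in_grid p -> in_grid (reflF p).
Proof. by case: p => r d /andP [/= r_lt d_lt]; rewrite /in_grid /= /wrap; split_ifs; lia. Qed.
Lemma reflF_inj : {in in_grid &, injective reflF}.
Proof.
move=> [r d] [r' d'] /andP [/= r_lt d_lt] /andP [/= r'_lt d'_lt] [].
by rewrite /wrap; split_ifs => e1 e2; congr (_, _); lia.
Qed.

Lemma shearF_grid p : in_grid p -> in_grid (shearF p).
Proof. by case: p => r d /andP [/= r_lt d_lt]; rewrite /in_grid /= d_lt /wrap; split_ifs; lia. Qed.
Lemma shearF_inj : {in in_grid &, injective shearF}.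
Proof.
move=> [r d] [r' d'] /andP [/= r_lt d_lt] /andP [/= r'_lt d'_lt] [+ ed].
by subst d'; rewrite /wrap; split_ifs => e; congr (_, _); lia.
Qed.

Lemma cycleF_grid p : in_grid p -> in_grid (cycleF p).
Proof. by case: p => [[|[|[|r]]] [|[|d]]]; rewrite /in_grid //=; lia. Qed.
Lemma cycleF_inj : {in in_grid &, injective cycleF}.
Proof.
have cycleF3 : cancel cycleF (cycleF \o cycleF) by case=> [[|[|[|r]]] [|[|d]]].
by move=> p q _ _ /(can_inj cycleF3).
Qed.

Definition rot k (k_lt : k < b.+2) := perm (grid_map_inj (rotF_grid k_lt) (rotF_inj k_lt)).
Definition refl := perm (grid_map_inj reflF_grid reflF_inj).
Definition shear := perm (grid_map_inj shearF_grid shearF_inj).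
Definition cycle3 := perm (grid_map_inj cycleF_grid cycleF_inj).

Lemma grid_permE F (F_grid : forall p, in_grid p -> in_grid (F p))
    (F_inj : {in in_grid &, injective F}) i :
  coords (perm (grid_map_inj F_grid F_inj) i) = F (coords i).
Proof. by rewrite permE grid_mapE. Qed.

Lemma rot_coords k (k_lt : k < b.+2) i : coords (rot k_lt i) = rotF k (coords i).
Proof. exact: grid_permE. Qed.
Lemma refl_coords i : coords (refl i) = reflF (coords i).
Proof. exact: grid_permE. Qed.

Lemma rot_prow k (k_lt : k < b.+2) i : prow (rot k_lt i) = wrap (prow i + k).
Proof. by rewrite -[LHS]/(coords _).1 rot_coords. Qed.
Lemma refl_prow i : prow (refl i) = wrap (b.+2 - prow i).
Proof. by rewrite -[LHS]/(coords _).1 refl_coords. Qed.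

Lemma rot_poff k (k_lt : k < b.+2) i : poff (rot k_lt i) = poff i.
Proof. by rewrite -[LHS]/(coords _).2 rot_coords. Qed.
Lemma refl_poff i : poff (refl i) = b.-1 - poff i.
Proof. by rewrite -[LHS]/(coords _).2 refl_coords. Qed.

Lemma rot_qcol k (k_lt : k < b.+2) i : qcol (rot k_lt i) = wrap (qcol i + k).
Proof.
rewrite /qcol -[prow _]/(coords _).1 -[poff (rot _ _)]/(coords _).2 rot_coords /=.
by have := prow_lt i; have := poff_lt i; rewrite /wrap; split_ifs; lia.
Qed.
Lemma refl_qcol i : qcol (refl i) = b.+1 - qcol i.
Proof.
rewrite /qcol -[prow _]/(coords _).1 -[poff (refl _)]/(coords _).2 refl_coords /=.
by have := prow_lt i; have := poff_lt i; rewrite /wrap; split_ifs; lia.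
Qed.

Lemma rot_preserves k (k_lt : k < b.+2) :
  preserves (rot k_lt) prow /\ preserves (rot k_lt) qcol.
Proof.
have wrap_inj u v : u < b.+2 -> v < b.+2 -> wrap (u + k) = wrap (v + k) -> u = v.
  by rewrite /wrap; split_ifs; lia.
by split; apply: preserves_of wrap_inj;
  [exact: prow_lt|exact: rot_prow|exact: qcol_lt|exact: rot_qcol].
Qed.

Lemma refl_preserves : preserves refl prow /\ preserves refl qcol.
Proof.
split.
  apply: (@preserves_of _ _ (fun r => wrap (b.+2 - r))) => [i|i|u v].
  - exact: prow_lt.
  - exact: refl_prow.
  - by rewrite /wrap; split_ifs; lia.
apply: (@preserves_of _ _ (fun c => b.+1 - c)) => [i|i|u v].
- exact: qcol_lt.
- exact: refl_qcol.
- by lia.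
Qed.

(* Compose x with the rotation
   bringing row 0 back; the image of column 0 is then a hole of row 0, i.e.
   column 0 or column b + 1, and in the latter case the reflection brings it
   back; what remains fixes row 0 and column 0, hence is trivial. *)
Lemma PQ_stabiliser_dihedral x : preserves x prow -> preserves x qcol ->
  exists k (k_lt : k < b.+2) (e : bool),
    (x^-1 = rot k_lt * if e then refl else 1)%g.
Proof.
move=> xP xQ; pose o := point (0, 0); pose j := point (b.+1, 0).
have o_row : prow o = 0 by rewrite prow_point ?b_gt0.
have j_col : qcol j = 0.
  by rewrite /qcol prow_point ?poff_point ?b_gt0 // /wrap; split_ifs; lia.
have k_lt : wrap (b.+2 - prow (x o)) < b.+2.
  by have := prow_lt (x o); rewrite /wrap; split_ifs; lia.
exists _, k_lt; pose y := (x * rot k_lt)%g.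
have [rotP rotQ] := rot_preserves k_lt; have [reflP reflQ] := refl_preserves.
have yP : preserves y prow by apply: preservesM.
have yQ : preserves y qcol by apply: preservesM.
have y_o : prow (y o) = 0.
  by rewrite permM rot_prow; have := prow_lt (x o); rewrite /wrap; split_ifs; lia.
have y_row0 : fixes_row y 0 by rewrite -o_row; apply: fixes_row_at; rewrite ?y_o.
have inv_eq w : (x * w = 1 -> x^-1 = w)%g by move=> xw; apply/eqP; rewrite eq_invg_mul xw.
have : hole 0 (qcol (y j)) by apply: hole_col; rewrite ?j_col.
rewrite /hole /wrap add0n ltnSn => /orP [] /eqP y_j.
  exists false; rewrite mulg1; apply: inv_eq.
  apply: (PQ_stabiliser_trivial yP yQ (ltn0Sn _) y_row0).
  by rewrite -j_col; apply: fixes_col_at; rewrite ?y_j.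
exists true; apply: inv_eq; rewrite mulgA.
have zP : preserves (y * refl)%g prow by apply: preservesM.
have zQ : preserves (y * refl)%g qcol by apply: preservesM.
apply: (PQ_stabiliser_trivial zP zQ (ltn0Sn _)).
  by rewrite -o_row; apply: fixes_row_at; rewrite // permM refl_prow y_o o_row /wrap ltnn subnn.
by rewrite -j_col; apply: fixes_col_at; rewrite // permM refl_qcol y_j j_col subnn.
Qed.

(* The third partition R: the points (0,0), (1,0), (2,1) are moved cyclically
   to the next of the P-blocks 0, 1, 2. *)
Definition rlab (i : 'I_n) := (cycleF (coords i)).1.

Lemma cycleF_row r d : (cycleF (r, d)).1 = if (r == 0) && (d == 0) then 1
  else if (r == 1) && (d == 0) then 2 else if (r == 2) && (d == 1) then 0 else r.
Proof. by case: r => [|[|[|r]]]; case: d => [|[|d]]. Qed.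

Lemma cycleF_row_succ r d : r < b.+2 -> d < b ->
  (cycleF (r, d)).1 = (cycleF (succ r, d)).1 -> r = 1 /\ d = 0.
Proof. by rewrite !cycleF_row /succ /wrap; split_ifs; lia. Qed.

(* No nontrivial element of the stabiliser of P and Q stabilises R; the two
   points (1,0) and (2,0) of the R-block 2 witness it. *)
Lemma dihedral_R_trivial k (k_lt : k < b.+2) (e : bool) :
  preserves (rot k_lt * if e then refl else 1)%g rlab -> k = 0 /\ e = false.
Proof.
have uv : rlab (point (1, 0)) = rlab (point (2, 0)).
  by rewrite /rlab !pointK // /in_grid /=; lia.
move=> /(_ (point (1, 0)) (point (2, 0))); rewrite uv eqxx => /eqP.
rewrite /rlab /coords !permM; case: e;
  rewrite ?perm1 ?refl_prow ?refl_poff !rot_prow !rot_poff !prow_point ?poff_point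
  ?b_gt0 //; try lia.
  set s := wrap (b.+2 - wrap (2 + k)).
  have -> : wrap (b.+2 - wrap (1 + k)) = succ s by rewrite /s /succ /wrap; split_ifs; lia.
  by move=> /esym /cycleF_row_succ []; rewrite /s /wrap; split_ifs; lia.
have -> : wrap (2 + k) = succ (wrap (1 + k)) by rewrite /succ /wrap; split_ifs; lia.
by move=> /cycleF_row_succ []; rewrite /wrap; split_ifs; lia.
Qed.

Lemma PQR_stabiliser_trivial x :
  preserves x prow -> preserves x qcol -> preserves x rlab -> x = 1%g.
Proof.
move=> xP xQ xR; have [k [k_lt [e xV]]] := PQ_stabiliser_dihedral xP xQ.
have := preservesV xR; rewrite xV => /dihedral_R_trivial [k0 e0]; subst k e.
have rot0 : rot k_lt = 1%g.
  apply/permP => i; rewrite perm1; apply: coords_inj.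
  by rewrite rot_coords /rotF addn0 /wrap prow_lt.
by rewrite -[x]invgK xV mulg1 rot0 invg1.
Qed.

Lemma shear_prow i : prow (shear i) = qcol i.
Proof. by rewrite -[LHS]/(coords _).1 grid_permE. Qed.
Lemma cycle3_prow i : prow (cycle3 i) = rlab i.
Proof. by rewrite -[LHS]/(coords _).1 grid_permE. Qed.

End UpperBound.

Section BaseSize.
Variable b : nat.
Hypothesis b_gt1 : 1 < b.
Local Notation n := (b.+2 * b).
Local Notation H := (block_stab n b).
Local Open Scope group_scope.

(* The conjugates of H by 1, shear^-1 and cycle3^-1 are the stabilisers of
   the partitions P, Q and R. *)
Definition PQR_base : {set {perm 'I_n}} := [set 1; (shear b_gt1)^-1; (cycle3 b_gt1)^-1].

Lemma PQR_base_cap : \bigcap_(g in PQR_base) H :^ g = [set 1].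
Proof.
apply/eqP; rewrite eqEsubset sub1set andbC; apply/andP; split.
  by apply/bigcapP => g _; apply/mem_block_stab_conj/preserves1.
apply/subsetP => x /bigcapP x_cap; rewrite inE; apply/eqP.
have conj_preserves g : g \in PQR_base -> preserves x (fun i => g^-1 i %/ b).
  by move=> g_base; apply/mem_block_stab_conj/x_cap.
have base1 : 1 \in PQR_base by rewrite !inE eqxx.
have baseQ : (shear b_gt1)^-1 \in PQR_base by rewrite !inE eqxx orbT.
have baseR : (cycle3 b_gt1)^-1 \in PQR_base by rewrite !inE eqxx !orbT.
have xP := conj_preserves _ base1.
have xQ := conj_preserves _ baseQ.
have xR := conj_preserves _ baseR.
apply: (PQR_stabiliser_trivial b_gt1).
- by apply: preserves_eq xP => i; rewrite invg1 perm1.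
- by apply: preserves_eq xQ => i; rewrite invgK; apply: shear_prow.
- by apply: preserves_eq xR => i; rewrite invgK; apply: cycle3_prow.
Qed.

(* In particular H has trivial core, so a base is a set of conjugates with
   trivial intersection. *)
Lemma core_block_stab : core [set: {perm 'I_n}] H = [set 1].
Proof.
apply/eqP; rewrite eqEsubset -{1}PQR_base_cap; apply/andP; split.
  by apply/bigcapsP => g _; apply: bigcap_inf; rewrite inE.
by rewrite sub1set; apply/bigcapP => g _; apply/mem_block_stab_conj/preserves1.
Qed.

Lemma base_card_ge3 (S : {set {perm 'I_n}}) :
  \bigcap_(g in S) H :^ g = [set 1] -> 3 <= #|S|.
Proof.
move=> S_base; rewrite leqNgt; apply/negP => S_small.
have [g [h S_gh]] : exists g h, S \subset [set g; h].
  move: S_small; rewrite ltnS leq_eqVlt ltnS leq_eqVlt ltnS leqn0 => /or3P [].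
  - by move=> /cards2P [g [h [_ ->]]]; exists g, h.
  - by move=> /cards1P [g ->]; exists g, g; rewrite sub1set !inE eqxx.
  - by move=> /eqP /cards0_eq ->; exists 1, 1; rewrite sub0set.
have [x x_nt] := block_stab_conjugates_meet g h (ltnW b_gt1).
rewrite inE => /andP [xg xh]; have : x \in \bigcap_(s in S) H :^ s.
  by apply/bigcapP => s /(subsetP S_gh); rewrite !inE => /orP [] /eqP ->.
by rewrite S_base inE (negbTE x_nt).
Qed.

(* The base {1, shear^-1, cycle3^-1} is minimal; the default value n! of the
   minimum in base_size is at least 3 as well. *)
Lemma base_size_block_stab : base_size [set: {perm 'I_n}] H = 3.
Proof.
apply/eqP; rewrite eqn_leq; apply/andP; split.
  have base_le : base_size [set: {perm 'I_n}] H <= #|PQR_base|.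
    apply: (@Order.TotalTheory.bigmin_le_cond _ _ _ _ PQR_base _ (fun S => #|S|)).
    by rewrite subsetT PQR_base_cap core_block_stab eqxx.
  apply: leq_trans base_le _; rewrite /PQR_base cardsU cards2 cards1; lia.
apply: (big_ind (fun v => 2 < v)) => [|u v u_gt2 v_gt2|S /andP [_ /eqP]].
- by rewrite cardsT card_Sn; apply: leq_trans (fact_geq _); nia.
- by rewrite leq_min u_gt2.
- by rewrite core_block_stab; apply: base_card_ge3.
Qed.
End BaseSize.

Theorem proposition2p4 (a b : nat) (hb : 2 <= b) (ha : a = b + 2) :
  base_size [set: {perm 'I_(a * b)}] (block_stab (a * b) b) = 3.
Proof. by subst a; rewrite addn2; apply: base_size_block_stab. Qed.
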